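(* Let $G$ be a modulo transmission irregular graph and let $H$ be a connected graph such that $|V(G)|$ and $|V(H)|$ are relatively prime. Then: (i) if $H$ is transmission irregular, then the Cartesian product $G\square H$ is transmission irregular; (ii) if $H$ is modulo transmission irregular, then $G\square H$ is modulo transmission irregular.
   Context: For a connected graph $X$, $Tr_X(x)=\sum_{y\in V(X)}d_X(x,y)$ is the transmission of vertex $x$. A connected graph is transmission irregular (TI) if no two vertices have equal transmissions, and modulo transmission irregular (MTI) if no two distinct vertices have transmissions congruent modulo the number of vertices of the graph. The Cartesian product $G\square H$ has vertex set $V(G)\times V(H)$, with $(u_G,u_H)$ adjacent to $(v_G,v_H)$ iff either $u_G=v_G$ and $u_Hv_H\in E(H)$, or $u_Gv_G\in E(G)$ and $u_H=v_H$. *)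

From mathcomp Require Import all_boot.
Set Implicit Arguments. Unset Strict Implicit. Unset Printing Implicit Defensive.

Section Graphs.
Variable T : finType.
Variable e : rel T.

Definition simple_graph : Prop := symmetric e /\ irreflexive e.

Definition connected_graph : Prop := 0 < #|T| /\ forall x y : T, connect e x y.

Definition walkb (n : nat) (x y : T) : bool :=
  [exists p : n.-tuple T, path e x p && (last x p == y)].

(* shortest-path distance: least n < #|T| with a walk of length n
   (meaningful for connected graphs, where such n always exists) *)
Definition dist (x y : T) : nat := find (fun n => walkb n x y) (iota 0 #|T|).

Definition transmission (x : T) : nat := \sum_(y : T) dist x y.

Definition TI : Prop := forall x y : T, transmission x = transmission y -> x = y.

Definition MTI : Prop :=
  forall x y : T, transmission x = transmission y %[mod #|T|] -> x = y.
End Graphs.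

Definition cartesian (T1 T2 : finType) (eG : rel T1) (eH : rel T2) : rel (T1 * T2) :=
  fun u v => ((u.1 == v.1) && eH u.2 v.2) || (eG u.1 v.1 && (u.2 == v.2)).

From mathcomp Require Import all_boot.
Set Implicit Arguments. Unset Strict Implicit. Unset Printing Implicit Defensive.

(* Distances in G □ H add coordinatewise, so
   Tr(g, h) = |V(H)| Tr_G(g) + |V(G)| Tr_H(h).
   Modulo |V(G)| the second term vanishes and |V(H)| is invertible, so the
   transmission of (g, h) determines Tr_G(g) mod |V(G)|, hence g by MTI of G.
   With g fixed, the remaining term |V(G)| Tr_H(h) determines Tr_H(h), exactly
   or modulo |V(H)| (the modulus |V(G)||V(H)| divided by |V(G)|), hence h. *)

Section Walks.
Variables (T : finType) (e : rel T).

Definition walk n (x y : T) :=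
  exists p : seq T, [/\ size p = n, path e x p & last x p = y].

Lemma walkbP n x y : reflect (walk n x y) (walkb e n x y).
Proof.
apply: (iffP existsP) => [[p /andP[ep /eqP lp]] | [p [sp ep lp]]].
  by exists (val p); rewrite size_tuple.
have sp' : size p == n by apply/eqP.
by exists (Tuple sp'); rewrite /= ep lp eqxx.
Qed.

Lemma walk0 x : walk 0 x x.
Proof. by exists [::]. Qed.

Lemma walk_cons n x y z : e x y -> walk n y z -> walk n.+1 x z.
Proof. by move=> exy [p [sp ep lp]]; exists (y :: p); rewrite /= exy ep sp. Qed.

Lemma walk_cat m n x y z : walk m x y -> walk n y z -> walk (m + n) x z.
Proof.
move=> [p [sp ep lp]] [q [sq eq' lq]]; exists (p ++ q).
by rewrite size_cat cat_path last_cat lp ep eq' sp sq.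
Qed.

Lemma connect_walk x y : connect e x y -> exists n, walk n x y.
Proof. by case/connectP => p ep lp; exists (size p), p. Qed.

Lemma walk_shorten n x y : walk n x y -> exists2 m, m < #|T| & walk m x y.
Proof.
move=> [p [_ ep lp]]; case: (shortenP ep) lp => p' ep' up' _ lp'.
exists (size p'); last by exists p'.
by have := max_card (mem (x :: p')); rewrite (card_uniqP up').
Qed.

Lemma has_walk_iota n x y :
  walk n x y -> has (fun k => walkb e k x y) (iota 0 #|T|).
Proof.
by case/walk_shorten => m ltmT wm; apply/hasP; exists m; [rewrite mem_iota | apply/walkbP].
Qed.

Lemma dist_ltn_card n x y : walk n x y -> dist e x y < #|T|.
Proof. by move/has_walk_iota; rewrite has_find size_iota. Qed.

Lemma dist_walk n x y : walk n x y -> walk (dist e x y) x y.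
Proof.
move=> wn; apply/walkbP.
by have := nth_find 0 (has_walk_iota wn); rewrite nth_iota ?(dist_ltn_card wn).
Qed.

Lemma dist_min n x y : walk n x y -> dist e x y <= n.
Proof.
move=> wn; have ltdT := dist_ltn_card wn.
case: (ltnP n #|T|) => [ltnT | leTn]; last exact: ltnW (leq_trans ltdT leTn).
rewrite leqNgt; apply/negP => ltnd.
by have := before_find 0 ltnd; rewrite nth_iota // add0n (introT (walkbP _ _ _) wn).
Qed.

End Walks.

Lemma eqn_modMl_coprime d k a b :
  coprime d k -> (k * a == k * b %[mod d]) = (a == b %[mod d]).
Proof.
move=> cdk; wlog le_ba : a b / b <= a.
  by move=> W; case: (leqP b a) => [/W // | /ltnW/W]; rewrite eq_sym [RHS]eq_sym.
by rewrite !eqn_mod_dvd ?leq_mul2l ?le_ba ?orbT // -mulnBr Gauss_dvdr.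
Qed.

Section Cartesian.
Variables (T1 T2 : finType) (eG : rel T1) (eH : rel T2).
Local Notation eC := (cartesian eG eH).

Lemma walk_cartesian_l n g g' h : walk eG n g g' -> walk eC n (g, h) (g', h).
Proof.
move=> [p [sp ep lp]]; exists (map (pair^~ h) p).
rewrite size_map last_map lp sp; split => //.
elim: p g ep {sp lp} => //= a p IHp g /andP[ega ep].
by rewrite IHp // /cartesian /= ega eqxx orbT.
Qed.

Lemma walk_cartesian_r n g h h' : walk eH n h h' -> walk eC n (g, h) (g, h').
Proof.
move=> [p [sp ep lp]]; exists (map (pair g) p).
rewrite size_map last_map lp sp; split => //.
elim: p h ep {sp lp} => //= a p IHp h /andP[eha ep].
by rewrite IHp // /cartesian /= eha eqxx.
Qed.

Lemma walk_cartesian_split n u v : walk eC n u v ->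
  exists a b, [/\ a + b = n, walk eG a u.1 v.1 & walk eH b u.2 v.2].
Proof.
move=> [p [<- ep <-]]; elim: p u ep => [|w p IHp] u /=.
  by exists 0, 0; split => //; apply: walk0.
case/andP=> euw /IHp[a [b [<- wG wH]]].
case/orP: euw => /andP[].
  move=> /eqP-> ehw; exists a, b.+1.
  by split; [rewrite addnS | | apply: walk_cons ehw wH].
move=> egw /eqP->; exists a.+1, b.
by split; [| apply: walk_cons egw wG |].
Qed.

Hypotheses (cG : connected_graph eG) (cH : connected_graph eH).

Lemma dist_cartesian u v : dist eC u v = dist eG u.1 v.1 + dist eH u.2 v.2.
Proof.
case: u v cG cH => g h [g' h'] [_ connG] [_ connH] /=.
have [nG /dist_walk wG] := connect_walk (connG g g').
have [nH /dist_walk wH] := connect_walk (connH h h').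
have wC := walk_cat (walk_cartesian_l h wG) (walk_cartesian_r g' wH).
apply/eqP; rewrite eqn_leq (dist_min wC) /=.
have [a [b [<- wa wb]]] := walk_cartesian_split (dist_walk wC).
by rewrite leq_add // dist_min.
Qed.

Lemma transmission_cartesian g h : transmission eC (g, h) =
  #|T2| * transmission eG g + #|T1| * transmission eH h.
Proof.
rewrite /transmission (eq_bigr (fun v => dist eG g v.1 + dist eH h v.2)).
  rewrite -(pair_bigA _ (fun a b => dist eG g a + dist eH h b)) /=.
  under eq_bigr => a _ do rewrite big_split /= sum_nat_const.
  by rewrite big_split /= -big_distrr /= sum_nat_const cardT enumT.
by move=> v _; rewrite dist_cartesian.
Qed.

Hypotheses (mtiG : MTI eG) (coT : coprime #|T1| #|T2|).

Lemma transmission_cartesian_eqmod g g' h h' :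
  transmission eC (g, h) = transmission eC (g', h') %[mod #|T1| * #|T2|] ->
  g = g' /\ transmission eH h = transmission eH h' %[mod #|T2|].
Proof.
rewrite !transmission_cartesian => E.
have EG : #|T2| * transmission eG g = #|T2| * transmission eG g' %[mod #|T1|].
  have := congr1 (modn ^~ #|T1|) E; rewrite /= !modn_dvdm ?dvdn_mulr //.
  by rewrite ![_ + #|T1| * _]addnC ![#|T1| * _]mulnC !modnMDl.
move/eqP: EG; rewrite eqn_modMl_coprime // => /eqP/mtiG eqg; subst g'.
split=> //; apply/eqP; rewrite -(eqn_pmul2l (proj1 cG)) !muln_modr.
by move/eqP: E; rewrite eqn_modDl.
Qed.

Lemma TI_cartesian : TI eH -> TI eC.
Proof.
move=> tiH [g h] [g' h'] E.
have [eqg _] := transmission_cartesian_eqmod (congr1 (modn ^~ _) E).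
move/eqP: E; rewrite -eqg !transmission_cartesian eqn_add2l eqn_pmul2l ?(proj1 cG) //.
by move=> /eqP/tiH->.
Qed.

Lemma MTI_cartesian : MTI eH -> MTI eC.
Proof.
move=> mtiH [g h] [g' h']; rewrite card_prod.
by case/transmission_cartesian_eqmod => <- /mtiH->.
Qed.

End Cartesian.

Theorem theorem2 (T1 T2 : finType) (eG : rel T1) (eH : rel T2) :
  simple_graph eG -> connected_graph eG -> MTI eG ->
  simple_graph eH -> connected_graph eH ->
  coprime #|T1| #|T2| ->
  (TI eH -> TI (cartesian eG eH)) /\ (MTI eH -> MTI (cartesian eG eH)).
Proof.
move=> _ cG mtiG _ cH coT.
by split; [apply: TI_cartesian | apply: MTI_cartesian].
Qed.
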